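(* Let $p_1=2,p_2,p_3,\dots$ be the consecutive primes, let $\chi$ be any Dirichlet character, and let $n\ge31$ (so $p_n\ge127$). Then $$B_\chi=R_1\,A\,L(2,\chi)L(3,\chi)L(4,\chi)\prod_{k=1}^{n}\Bigl(1+\frac{\chi(p_k)}{p_k(p_k^2-p_k-1)}\Bigr)\Bigl(1-\frac{\chi(p_k)}{p_k^3}\Bigr)\Bigl(1-\frac{\chi(p_k)}{p_k^4}\Bigr)$$ for a complex number $R_1$ satisfying $$\frac{1}{1+p_{n+1}^{-3.85}}\le|R_1|\le1+\frac{1}{p_{n+1}^{3.85}}.$$
   Context: $A=\prod_p\bigl(1-\frac{1}{p(p-1)}\bigr)$ (Artin's constant, product over primes). For a Dirichlet character $\chi$, $L(s,\chi)=\sum_{n\ge1}\chi(n)n^{-s}$ and $B_\chi=\prod_p\Bigl(1+\frac{(\chi(p)-1)p}{(p^2-\chi(p))(p-1)}\Bigr)$, the product over all primes $p$. *)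

From Stdlib Require Import Reals ZArith Znumtheory Arith.
From Coquelicot Require Export Coquelicot.
Open Scope R_scope.

Definition is_prime (p : nat) : Prop := Znumtheory.prime (Z.of_nat p).

Definition dirichlet_character (q : nat) (chi : nat -> C) : Prop :=
  (1 <= q)%nat /\
  chi 1%nat = RtoC 1 /\
  (forall m n : nat, chi (m * n)%nat = Cmult (chi m) (chi n)) /\
  (forall n : nat, chi (n + q)%nat = chi n) /\
  (forall n : nat, chi n <> RtoC 0 <-> Nat.gcd n q = 1%nat).

Definition consecutive_primes (pr : nat -> nat) : Prop :=
  pr 1%nat = 2%nat /\
  (forall k, (1 <= k)%nat -> is_prime (pr k)) /\
  (forall k, (1 <= k)%nat -> (pr k < pr (S k))%nat) /\
  (forall p, is_prime p -> exists k, (1 <= k)%nat /\ pr k = p).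

Definition Clim (u : nat -> C) : C :=
  @lim (CompleteNormedModule.CompleteSpace C_AbsRing C_CompleteNormedModule)
    (filtermap u eventually).

Fixpoint prod_primes_below (f : nat -> C) (N : nat) : C :=
  match N with
  | O => RtoC 1
  | S m => Cmult (prod_primes_below f m)
             (if prime_dec (Z.of_nat m) then f m else RtoC 1)
  end.

Definition prod_over_primes (f : nat -> C) : C :=
  Clim (prod_primes_below f).

Fixpoint prod_1_to (g : nat -> C) (n : nat) : C :=
  match n with
  | O => RtoC 1
  | S m => Cmult (prod_1_to g m) (g (S m))
  end.

Fixpoint sum_1_to (g : nat -> C) (n : nat) : C :=
  match n with
  | O => RtoC 0
  | S m => Cplus (sum_1_to g m) (g (S m))
  end.

Definition artinA : C :=
  prod_over_primes (fun p => RtoC (1 - / (INR p * (INR p - 1)))).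

Definition Lfun (s : nat) (chi : nat -> C) : C :=
  Clim (sum_1_to (fun k => Cdiv (chi k) (RtoC (INR k ^ s)))).

Definition Bchi (chi : nat -> C) : C :=
  prod_over_primes (fun p =>
    Cplus (RtoC 1)
      (Cdiv (Cmult (Cminus (chi p) (RtoC 1)) (RtoC (INR p)))
            (Cmult (Cminus (RtoC (INR p ^ 2)) (chi p)) (RtoC (INR p - 1))))).

Definition local_factor (chi : nat -> C) (p : nat) : C :=
  Cmult (Cmult
    (Cplus (RtoC 1) (Cdiv (chi p) (RtoC (INR p * (INR p ^ 2 - INR p - 1)))))
    (Cminus (RtoC 1) (Cdiv (chi p) (RtoC (INR p ^ 3)))))
    (Cminus (RtoC 1) (Cdiv (chi p) (RtoC (INR p ^ 4)))).

(* The Euler factor of B_chi at p factors exactly as the Artin factor, the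
   inverse Euler factors of L(2,chi), L(3,chi), L(4,chi), and the local factor
   (1 + chi(p)/(p(p^2-p-1)))(1 - chi(p)/p^3)(1 - chi(p)/p^4), which is
   1 + O(p^-5) because the terms of order p^-3 and p^-4 cancel.  Taking the
   product over all primes, the local factors at p_1, ..., p_n give the finite
   product and those at the larger primes give R_1.  Since
   |local factor - 1| <= 5/(2p^5), the tail satisfies
   1 - s <= |R_1| <= 1/(1 - s) with s = 5/(4P^2(P-2)(P-1)) and P = p_(n+1),
   and s <= 1/(P^3.85 + 1) as soon as P >= 33.  The Euler products of
   L(s,chi), s >= 2, are obtained by sieving the Dirichlet series one prime
   at a time. *)

From Stdlib Require Import Reals Lra Lia Psatz ZArith Znumtheory Arith.
From Coquelicot Require Import Coquelicot.
Open Scope R_scope.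

Definition Ccvg (u : nat -> C) (l : C) : Prop :=
  forall eps, 0 < eps -> exists N, forall n, (N <= n)%nat -> Cmod (u n - l)%C < eps.

Definition Ccauchy (u : nat -> C) : Prop :=
  forall eps, 0 < eps -> exists N, forall m n, (N <= m)%nat -> (N <= n)%nat ->
    Cmod (u m - u n)%C < eps.

Lemma Cmod_sub_sym (a b : C) : Cmod (a - b)%C = Cmod (b - a)%C.
Proof. rewrite <- Cmod_opp. f_equal. ring. Qed.

Lemma Cmod_sub_triangle (a b c : C) : Cmod (a - c)%C <= Cmod (a - b)%C + Cmod (b - c)%C.
Proof. replace (a - c)%C with ((a - b) + (b - c))%C by ring. apply Cmod_triangle. Qed.

Lemma Cmod_le_add_sub (a b : C) : Cmod a <= Cmod b + Cmod (a - b)%C.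
Proof. replace a with (b + (a - b))%C at 1 by ring. apply Cmod_triangle. Qed.

Lemma Cmod_1_add_le (a : C) : Cmod (1 + a)%C <= 1 + Cmod a.
Proof. rewrite <- Cmod_1 at 2. apply Cmod_triangle. Qed.

Lemma Cmod_1_add_ge (a : C) : 1 - Cmod a <= Cmod (1 + a)%C.
Proof.
  pose proof (Cmod_le_add_sub 1 (1 + a)%C) as H.
  replace (1 - (1 + a))%C with (- a)%C in H by ring.
  rewrite Cmod_1, Cmod_opp in H. lra.
Qed.

Lemma Ccauchy_cvg_Clim (u : nat -> C) : Ccauchy u -> Ccvg u (Clim u).
Proof.
  intros Hu.
  set (F := filtermap u eventually).
  assert (PF : ProperFilter F) by apply filtermap_proper_filter, eventually_filter.
  assert (HF : @cauchy (CompleteNormedModule.CompleteSpace C_AbsRing C_CompleteNormedModule) F).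
  { intros eps. destruct (Hu (eps / 2)) as [N HN]; [destruct eps; simpl; lra|].
    exists (u N), N. intros n Hn.
    apply (@norm_compat1 C_AbsRing C_NormedModule).
    change (Cmod (u n - u N)%C < eps).
    specialize (HN n N Hn (le_n _)). destruct eps; simpl in *. lra. }
  pose proof (@norm_factor_gt_0 C_AbsRing C_NormedModule) as Hk.
  set (k := @norm_factor C_AbsRing C_NormedModule) in Hk.
  intros eps Heps.
  assert (Hd : 0 < eps / (2 * k)) by (apply Rdiv_lt_0_compat; lra).
  destruct (@complete_cauchy (CompleteNormedModule.CompleteSpace C_AbsRing C_CompleteNormedModule) F PF HF (mkposreal _ Hd)) as [N HN].
  exists N. intros n Hn.
  pose proof (@norm_compat2 C_AbsRing C_NormedModule _ (u n) (mkposreal _ Hd) (HN n Hn)) as H.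
  change (Cmod (u n - Clim u)%C < k * (eps / (2 * k))) in H.
  replace (k * (eps / (2 * k))) with (eps / 2) in H by (field; lra). lra.
Qed.

Lemma Ccvg_Ccauchy u l : Ccvg u l -> Ccauchy u.
Proof.
  intros H eps He. destruct (H (eps / 2)) as [N HN]; [lra|].
  exists N. intros m n Hm Hn.
  pose proof (Cmod_sub_triangle (u m) l (u n)) as T.
  rewrite (Cmod_sub_sym l) in T. pose proof (HN m Hm). pose proof (HN n Hn). lra.
Qed.

Lemma Ccvg_unique u l l' : Ccvg u l -> Ccvg u l' -> l = l'.
Proof.
  intros H1 H2.
  assert (Hsmall : forall e, 0 < e -> Cmod (l - l')%C < e).
  { intros e He.
    destruct (H1 (e / 2)) as [N1 HN1]; [lra|]. destruct (H2 (e / 2)) as [N2 HN2]; [lra|].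
    pose proof (HN1 (N1 + N2)%nat ltac:(lia)). pose proof (HN2 (N1 + N2)%nat ltac:(lia)).
    pose proof (Cmod_sub_triangle l (u (N1 + N2)%nat) l') as T.
    rewrite (Cmod_sub_sym l (u _)) in T. lra. }
  assert (H0 : Cmod (l - l')%C = 0).
  { pose proof (Cmod_ge_0 (l - l')%C).
    destruct (Rle_lt_or_eq_dec _ _ H) as [Hlt|]; [|auto].
    specialize (Hsmall _ Hlt). lra. }
  apply Cmod_eq_0 in H0. replace l with ((l - l') + l')%C by ring. rewrite H0. ring.
Qed.

Lemma Ccvg_Clim u l : Ccvg u l -> Clim u = l.
Proof.
  intros H. apply (Ccvg_unique u); [|exact H].
  apply Ccauchy_cvg_Clim. exact (Ccvg_Ccauchy u l H).
Qed.

Lemma Ccvg_eventually_ext u v l N0 :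
  (forall n, (N0 <= n)%nat -> u n = v n) -> Ccvg u l -> Ccvg v l.
Proof.
  intros E H eps He. destruct (H eps He) as [N HN]. exists (N + N0)%nat.
  intros n Hn. rewrite <- E by lia. apply HN; lia.
Qed.

Lemma Ccvg_const c : Ccvg (fun _ => c) c.
Proof. intros eps He. exists 0%nat. intros. replace (c - c)%C with (RtoC 0) by ring. rewrite Cmod_0. exact He. Qed.

Lemma Ccvg_mul_index u l p : (1 <= p)%nat -> Ccvg u l -> Ccvg (fun n => u (p * n)%nat) l.
Proof. intros Hp H eps He. destruct (H eps He) as [N HN]. exists N. intros n Hn. apply HN. nia. Qed.

Lemma Ccvg_minus u v a b : Ccvg u a -> Ccvg v b -> Ccvg (fun n => u n - v n)%C (a - b)%C.
Proof.
  intros Hu Hv eps He.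
  destruct (Hu (eps / 2)) as [N1 H1]; [lra|]. destruct (Hv (eps / 2)) as [N2 H2]; [lra|].
  exists (N1 + N2)%nat. intros n Hn.
  replace (u n - v n - (a - b))%C with ((u n - a) + - (v n - b))%C by ring.
  eapply Rle_lt_trans; [apply Cmod_triangle|]. rewrite Cmod_opp.
  pose proof (H1 n ltac:(lia)). pose proof (H2 n ltac:(lia)). lra.
Qed.

Lemma Ccvg_mult u v a b : Ccvg u a -> Ccvg v b -> Ccvg (fun n => u n * v n)%C (a * b)%C.
Proof.
  intros Hu Hv eps He.
  pose proof (Cmod_ge_0 a). pose proof (Cmod_ge_0 b).
  set (d := eps / (2 * (Cmod a + 1 + Cmod b))).
  assert (Hd : 0 < d) by (apply Rdiv_lt_0_compat; lra).
  destruct (Hu (Rmin 1 d)) as [N1 H1]; [apply Rmin_pos; lra|].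
  destruct (Hv d Hd) as [N2 H2].
  exists (N1 + N2)%nat. intros n Hn.
  specialize (H1 n ltac:(lia)). specialize (H2 n ltac:(lia)).
  pose proof (Rmin_l 1 d). pose proof (Rmin_r 1 d).
  replace (u n * v n - a * b)%C with (u n * (v n - b) + b * (u n - a))%C by ring.
  eapply Rle_lt_trans; [apply Cmod_triangle|]. rewrite !Cmod_mult.
  assert (Hun : Cmod (u n) <= Cmod a + 1) by (pose proof (Cmod_le_add_sub (u n) a); lra).
  assert (Cmod (u n) * Cmod (v n - b)%C <= (Cmod a + 1) * d)
    by (apply Rmult_le_compat; try apply Cmod_ge_0; lra).
  assert (Cmod b * Cmod (u n - a)%C <= Cmod b * d)
    by (apply Rmult_le_compat_l; lra).
  assert ((Cmod a + 1) * d + Cmod b * d = eps / 2) by (unfold d; field; lra).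
  lra.
Qed.

Lemma Ccvg_inv u l : Ccvg u l -> l <> RtoC 0 -> Ccvg (fun n => / u n)%C (/ l)%C.
Proof.
  intros Hu Hl eps He.
  assert (Hm : 0 < Cmod l) by (apply Cmod_gt_0; exact Hl).
  set (d := eps * Cmod l ^ 2 / 2).
  assert (Hd : 0 < d) by (unfold d; pose proof (pow_lt _ 2 Hm); apply Rdiv_lt_0_compat; [apply Rmult_lt_0_compat|]; lra).
  destruct (Hu (Rmin (Cmod l / 2) d)) as [N HN]; [apply Rmin_pos; lra|].
  exists N. intros n Hn. specialize (HN n Hn).
  pose proof (Rmin_l (Cmod l / 2) d). pose proof (Rmin_r (Cmod l / 2) d).
  assert (Hun : Cmod l / 2 <= Cmod (u n)).
  { pose proof (Cmod_le_add_sub l (u n)). rewrite Cmod_sub_sym in H1. lra. }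
  assert (Hu0 : u n <> RtoC 0) by (apply Cmod_gt_0; lra).
  replace (/ u n - / l)%C with ((l - u n) / (u n * l))%C by (field; split; assumption).
  rewrite Cmod_div, Cmod_mult, (Cmod_sub_sym l) by (apply Cmult_neq_0; assumption).
  apply Rmult_lt_reg_r with (Cmod (u n) * Cmod l); [nra|].
  unfold Rdiv. rewrite Rmult_assoc, Rinv_l, Rmult_1_r by nra.
  assert (Cmod l ^ 2 / 2 <= Cmod (u n) * Cmod l) by nra.
  unfold d in *. nra.
Qed.

Lemma Ccvg_Cmod_bounds u l lo hi N0 : Ccvg u l ->
  (forall n, (N0 <= n)%nat -> lo <= Cmod (u n) <= hi) -> lo <= Cmod l <= hi.
Proof.
  intros H Hb. split; apply Rnot_lt_le; intros Hlt.
  - destruct (H (lo - Cmod l)) as [N HN]; [lra|].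
    specialize (HN (N + N0)%nat ltac:(lia)). specialize (Hb (N + N0)%nat ltac:(lia)).
    pose proof (Cmod_le_add_sub (u (N + N0)%nat) l). lra.
  - destruct (H (Cmod l - hi)) as [N HN]; [lra|].
    specialize (HN (N + N0)%nat ltac:(lia)). specialize (Hb (N + N0)%nat ltac:(lia)).
    pose proof (Cmod_le_add_sub l (u (N + N0)%nat)). rewrite Cmod_sub_sym in H0. lra.
Qed.

Fixpoint rsum (g : nat -> R) (N k : nat) : R :=
  match k with O => 0 | S j => rsum g N j + g (N + j)%nat end.

Fixpoint csum (g : nat -> C) (N k : nat) : C :=
  match k with O => RtoC 0 | S j => (csum g N j + g (N + j)%nat)%C end.

Fixpoint cprod (f : nat -> C) (N k : nat) : C :=
  match k with O => RtoC 1 | S j => (cprod f N j * f (N + j)%nat)%C end.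

Lemma rsum_nonneg g N k : (forall m, 0 <= g m) -> 0 <= rsum g N k.
Proof. intros H. induction k; simpl; [lra|]. pose proof (H (N + k)%nat). lra. Qed.

Lemma rsum_le g h N k : (forall m, (N <= m)%nat -> g m <= h m) -> rsum g N k <= rsum h N k.
Proof. intros H. induction k; simpl; [lra|]. pose proof (H (N + k)%nat ltac:(lia)). lra. Qed.

Lemma rsum_add g N k j : rsum g N (k + j) = rsum g N k + rsum g (N + k) j.
Proof.
  induction j; simpl; [rewrite Nat.add_0_r; lra|].
  rewrite Nat.add_succ_r. simpl. rewrite IHj, Nat.add_assoc. lra.
Qed.

Lemma rsum_scal c g N k : rsum (fun m => c * g m) N k = c * rsum g N k.
Proof. induction k; simpl; [ring|]. rewrite IHk. ring. Qed.

Lemma rsum_term_le g N k j : (forall m, 0 <= g m) -> (j < k)%nat -> g (N + j)%nat <= rsum g N k.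
Proof.
  intros Hg Hj. induction k as [|k IH]; [lia|]. simpl.
  destruct (Nat.eq_dec j k) as [->|Hne].
  - pose proof (rsum_nonneg g N k Hg). lra.
  - pose proof (IH ltac:(lia)). pose proof (Hg (N + k)%nat). lra.
Qed.

Lemma rsum_telescope g f N k :
  (forall m, (N <= m)%nat -> g m <= f m - f (S m)) -> (forall m, (N <= m)%nat -> 0 <= f m) ->
  rsum g N k <= f N.
Proof.
  intros Hg Hf.
  assert (Htel : rsum g N k <= f N - f (N + k)%nat).
  { induction k; simpl; [rewrite Nat.add_0_r; lra|].
    pose proof (Hg (N + k)%nat ltac:(lia)). rewrite Nat.add_succ_r. lra. }
  pose proof (Hf (N + k)%nat ltac:(lia)). lra.
Qed.

Lemma rsum_zero g N k : (forall m, (N <= m < N + k)%nat -> g m = 0) -> rsum g N k = 0.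
Proof. intros H. induction k; simpl; [lra|]. rewrite IHk, H by (intros; try apply H; lia). lra. Qed.

Lemma rsum_shift_le g N M k : (forall m, 0 <= g m) -> (N <= M)%nat ->
  (forall m, (N <= m < M)%nat -> g m = 0) -> rsum g N k <= rsum g M k.
Proof.
  intros Hg HNM Hz.
  assert (E : rsum g N ((M - N) + k) = rsum g M k).
  { rewrite rsum_add, rsum_zero by (intros; apply Hz; lia). replace (N + (M - N))%nat with M by lia. lra. }
  rewrite <- E, Nat.add_comm, rsum_add.
  pose proof (rsum_nonneg g (N + k) (M - N) Hg). lra.
Qed.

Lemma Cmod_csum_le g N k : Cmod (csum g N k) <= rsum (fun m => Cmod (g m)) N k.
Proof. induction k; simpl; [rewrite Cmod_0; lra|]. eapply Rle_trans; [apply Cmod_triangle|]. lra. Qed.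

Lemma csum_zero g N k : (forall j, (j < k)%nat -> g (N + j)%nat = RtoC 0) -> csum g N k = RtoC 0.
Proof. intros H. induction k; simpl; [auto|]. rewrite IHk, H by (intros; try apply H; lia). ring. Qed.

Lemma sum_1_to_add g X k : sum_1_to g (X + k) = (sum_1_to g X + csum g (S X) k)%C.
Proof.
  induction k; simpl; [rewrite Nat.add_0_r; ring|].
  rewrite Nat.add_succ_r. simpl. rewrite IHk. ring.
Qed.

Lemma sum_1_to_ext g h X : (forall n, (1 <= n)%nat -> g n = h n) -> sum_1_to g X = sum_1_to h X.
Proof. intros H. induction X; simpl; [auto|]. rewrite IHX, H by lia. auto. Qed.

Lemma sum_1_to_minus g h X :
  sum_1_to (fun n => g n - h n)%C X = (sum_1_to g X - sum_1_to h X)%C.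
Proof. induction X; simpl; [ring|]. rewrite IHX. ring. Qed.

Lemma sum_1_to_scal c g X : sum_1_to (fun n => c * g n)%C X = (c * sum_1_to g X)%C.
Proof. induction X; simpl; [ring|]. rewrite IHX. ring. Qed.

Lemma cprod_add f N k j : cprod f N (k + j) = (cprod f N k * cprod f (N + k) j)%C.
Proof.
  induction j; simpl; [rewrite Nat.add_0_r; ring|].
  rewrite Nat.add_succ_r. simpl. rewrite IHj, Nat.add_assoc. ring.
Qed.

Section ProductEstimates.

Variable a : nat -> C.
Local Notation Sa N k := (rsum (fun m => Cmod (a m)) N k).

Lemma cprod_sub1_le N k :
  Sa N k < 1 -> Cmod (cprod (fun m => 1 + a m)%C N k - 1)%C <= Sa N k / (1 - Sa N k).
Proof.
  induction k; simpl; intros H.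
  - replace (1 - 1)%C with (RtoC 0) by ring. rewrite Cmod_0. unfold Rdiv. rewrite Rmult_0_l. lra.
  - set (s := Sa N k) in *. set (x := Cmod (a (N + k)%nat)) in *.
    assert (0 <= s) by (apply rsum_nonneg; intros; apply Cmod_ge_0).
    assert (0 <= x) by apply Cmod_ge_0.
    set (P := cprod (fun m => 1 + a m)%C N k) in *.
    specialize (IHk ltac:(lra)).
    replace (P * (1 + a (N + k)%nat) - 1)%C with ((P - 1) * (1 + a (N + k)%nat) + a (N + k)%nat)%C
      by ring.
    eapply Rle_trans; [apply Cmod_triangle|]. rewrite Cmod_mult.
    eapply Rle_trans.
    { apply Rplus_le_compat_r, Rmult_le_compat; [apply Cmod_ge_0 | apply Cmod_ge_0 | exact IHk |].
      apply Cmod_1_add_le. }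
    fold x. replace (s / (1 - s) * (1 + x) + x) with ((s + x) * / (1 - s)) by (field; lra).
    apply Rmult_le_compat_l; [lra|]. apply Rinv_le_contravar; lra.
Qed.

Lemma cprod_Cmod_ge N k : Sa N k <= 1 -> 1 - Sa N k <= Cmod (cprod (fun m => 1 + a m)%C N k).
Proof.
  induction k; simpl; intros H.
  - rewrite Cmod_1. lra.
  - set (s := Sa N k) in *. set (x := Cmod (a (N + k)%nat)) in *.
    assert (0 <= s) by (apply rsum_nonneg; intros; apply Cmod_ge_0).
    assert (0 <= x) by apply Cmod_ge_0.
    specialize (IHk ltac:(lra)). rewrite Cmod_mult.
    pose proof (Cmod_1_add_ge (a (N + k)%nat)). fold x in H2.
    assert ((1 - s) * (1 - x) <= Cmod (cprod (fun m => 1 + a m)%C N k) * Cmod (1 + a (N + k))%C)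
      by (apply Rmult_le_compat; lra).
    nra.
Qed.

Lemma cprod_Cmod_le_exp N k : Cmod (cprod (fun m => 1 + a m)%C N k) <= exp (Sa N k).
Proof.
  induction k; simpl.
  - rewrite Cmod_1, exp_0. lra.
  - rewrite Cmod_mult, exp_plus. apply Rmult_le_compat; try apply Cmod_ge_0; [exact IHk|].
    eapply Rle_trans; [apply Cmod_1_add_le | apply exp_ineq1_le].
Qed.

End ProductEstimates.

Definition small_tails (g : nat -> R) : Prop :=
  forall eps, 0 < eps -> exists N, forall M k, (N <= M)%nat -> rsum g M k <= eps.

Lemma small_tails_le g h :
  (forall m, (1 <= m)%nat -> g m <= h m) -> small_tails h -> small_tails g.
Proof.
  intros Hgh Hh eps He. destruct (Hh eps He) as [N HN]. exists (S N). intros M k HM.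
  eapply Rle_trans; [apply rsum_le with (h := h) | apply HN; lia].
  intros m Hm. apply Hgh. lia.
Qed.

Lemma small_tails_scal c g : 0 <= c -> small_tails g -> small_tails (fun m => c * g m).
Proof.
  intros Hc Hg eps He. destruct (Hg (eps / (c + 1))) as [N HN]; [apply Rdiv_lt_0_compat; lra|].
  exists N. intros M k HM. rewrite rsum_scal.
  apply Rle_trans with (c * (eps / (c + 1))); [apply Rmult_le_compat_l; auto|].
  apply Rmult_le_reg_r with (c + 1); [lra|].
  replace (c * (eps / (c + 1)) * (c + 1)) with (c * eps) by (field; lra). nra.
Qed.

Lemma inv_sq_le_telescope (x : R) : 1 <= x -> / x ^ 2 <= 2 / (2 * x - 1) - 2 / (2 * (x + 1) - 1).
Proof.
  intros Hx.
  replace (2 / (2 * x - 1) - 2 / (2 * (x + 1) - 1)) with (/ (x ^ 2 - / 4)) by (field; nra).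
  apply Rinv_le_contravar; nra.
Qed.

Lemma small_tails_inv_sq : small_tails (fun m => / INR m ^ 2).
Proof.
  set (f := fun m => 2 / (2 * INR m - 1)).
  assert (Htail : forall M k, (1 <= M)%nat -> rsum (fun m => / INR m ^ 2) M k <= f M).
  { intros M k HM. apply rsum_telescope.
    - intros m Hm. unfold f. rewrite S_INR. apply inv_sq_le_telescope.
      apply (le_INR 1). lia.
    - intros m Hm. unfold f. apply Rlt_le, Rdiv_lt_0_compat; [lra|].
      pose proof (le_INR 1 m ltac:(lia)). simpl in *. lra. }
  intros eps He. destruct (archimed_cor1 (eps / 2)) as [N [HN1 HN2]]; [lra|].
  exists N. intros M k HM. eapply Rle_trans; [apply Htail; lia|].
  assert (HNM : INR N <= INR M) by (apply le_INR; exact HM).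
  assert (1 <= INR N) by (apply (le_INR 1); lia).
  unfold f. apply Rle_trans with (2 * / INR N).
  - unfold Rdiv. apply Rmult_le_compat_l; [lra|]. apply Rinv_le_contravar; lra.
  - lra.
Qed.

Lemma small_tails_bounded g : (forall m, 0 <= g m) -> small_tails g ->
  exists B, forall N k, rsum g N k <= B.
Proof.
  intros Hg Ht. destruct (Ht 1 Rlt_0_1) as [N0 HN0].
  exists (rsum g 0 N0 + 1). intros N k.
  assert (H1 : rsum g N k <= rsum g 0 (N + k)).
  { rewrite rsum_add. simpl. pose proof (rsum_nonneg g 0 N Hg). lra. }
  assert (H2 : rsum g 0 (N + k) <= rsum g 0 (N0 + (N + k))).
  { rewrite (Nat.add_comm N0), (rsum_add g 0 (N + k) N0).
    pose proof (rsum_nonneg g (0 + (N + k)) N0 Hg). lra. }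
  rewrite (rsum_add g 0 N0) in H2. simpl in H2. pose proof (HN0 N0 (N + k)%nat (le_n _)). lra.
Qed.

Lemma sum_1_to_cauchy g : small_tails (fun m => Cmod (g m)) -> Ccauchy (sum_1_to g).
Proof.
  intros Ht eps He. destruct (Ht (eps / 3)) as [N HN]; [lra|].
  exists N. intros m n Hm Hn.
  replace m with (N + (m - N))%nat by lia. replace n with (N + (n - N))%nat by lia.
  rewrite !sum_1_to_add.
  replace (sum_1_to g N + csum g (S N) (m - N) - (sum_1_to g N + csum g (S N) (n - N)))%C
    with (csum g (S N) (m - N) + - csum g (S N) (n - N))%C by ring.
  eapply Rle_lt_trans; [apply Cmod_triangle|]. rewrite Cmod_opp.
  pose proof (Cmod_csum_le g (S N) (m - N)). pose proof (HN (S N) (m - N)%nat ltac:(lia)).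
  pose proof (Cmod_csum_le g (S N) (n - N)). pose proof (HN (S N) (n - N)%nat ltac:(lia)).
  lra.
Qed.

Lemma cprod_cauchy a : small_tails (fun m => Cmod (a m)) ->
  Ccauchy (fun N => cprod (fun m => 1 + a m)%C 0 N).
Proof.
  intros Ht. set (P := cprod (fun m => 1 + a m)%C).
  destruct (small_tails_bounded _ (fun m => Cmod_ge_0 (a m)) Ht) as [B HB].
  set (K := exp B). assert (HK : 0 < K) by apply exp_pos.
  intros eps He. set (d := Rmin (1 / 2) (eps / (8 * K))).
  assert (Hd : 0 < d) by (apply Rmin_pos; [lra | apply Rdiv_lt_0_compat; lra]).
  assert (d <= 1 / 2) by apply Rmin_l. assert (d <= eps / (8 * K)) by apply Rmin_r.
  destruct (Ht d Hd) as [N HN]. exists N. intros m n Hm Hn.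
  assert (Hclose : forall k, Cmod (P N k - 1)%C <= eps / (4 * K)).
  { intros k. pose proof (HN N k (le_n _)).
    set (s := rsum (fun m => Cmod (a m)) N k) in *.
    assert (0 <= s) by (apply rsum_nonneg; intros; apply Cmod_ge_0).
    eapply Rle_trans; [apply cprod_sub1_le; fold s; lra|]. fold s.
    apply Rmult_le_reg_r with (1 - s); [lra|].
    replace (s / (1 - s) * (1 - s)) with s by (field; lra).
    replace (eps / (4 * K)) with (2 * (eps / (8 * K))) by (field; lra). nra. }
  assert (Hhead : Cmod (P 0%nat N) <= K).
  { eapply Rle_trans; [apply cprod_Cmod_le_exp|]. destruct (Rle_lt_or_eq_dec _ _ (HB 0%nat N)) as [Hlt|E]; [left; apply exp_increasing, Hlt | rewrite E; right; reflexivity]. }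
  replace m with (N + (m - N))%nat by lia. replace n with (N + (n - N))%nat by lia.
  unfold P. rewrite !cprod_add. fold P. simpl (0 + N)%nat.
  replace (P 0%nat N * P N (m - N)%nat - P 0%nat N * P N (n - N)%nat)%C
    with (P 0%nat N * ((P N (m - N)%nat - 1) + - (P N (n - N)%nat - 1)))%C by ring.
  rewrite Cmod_mult.
  assert (Cmod ((P N (m - N)%nat - 1) + - (P N (n - N)%nat - 1))%C <= eps / (2 * K)).
  { eapply Rle_trans; [apply Cmod_triangle|]. rewrite Cmod_opp.
    pose proof (Hclose (m - N)%nat). pose proof (Hclose (n - N)%nat).
    replace (eps / (2 * K)) with (eps / (4 * K) + eps / (4 * K)) by (field; lra). lra. }
  apply Rle_lt_trans with (K * (eps / (2 * K))).
  - apply Rmult_le_compat; try apply Cmod_ge_0; assumption.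
  - replace (K * (eps / (2 * K))) with (eps / 2) by (field; lra). lra.
Qed.

Lemma prod_primes_below_mult f g N : prod_primes_below (fun m => f m * g m)%C N =
  (prod_primes_below f N * prod_primes_below g N)%C.
Proof. induction N; simpl; [ring|]. rewrite IHN. destruct (prime_dec (Z.of_nat N)); ring. Qed.

Lemma prod_primes_below_ext f g N :
  (forall m, (m < N)%nat -> prime (Z.of_nat m) -> f m = g m) ->
  prod_primes_below f N = prod_primes_below g N.
Proof.
  intros H. induction N; simpl; [auto|]. rewrite IHN by (intros; apply H; auto; lia).
  destruct (prime_dec (Z.of_nat N)); [rewrite H by (auto; lia)|]; auto.
Qed.

Lemma prod_primes_below_one f N : (forall m, prime (Z.of_nat m) -> f m = RtoC 1) ->
  prod_primes_below f N = RtoC 1.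
Proof.
  intros H. induction N; simpl; [auto|]. rewrite IHN.
  destruct (prime_dec (Z.of_nat N)); [rewrite H by auto|]; ring.
Qed.

Lemma prod_primes_below_skip f K d :
  (forall m, (K <= m < K + d)%nat -> prime (Z.of_nat m) -> f m = RtoC 1) ->
  prod_primes_below f (K + d) = prod_primes_below f K.
Proof.
  intros H. induction d; [rewrite Nat.add_0_r; auto|].
  rewrite Nat.add_succ_r. simpl. rewrite IHd by (intros; apply H; auto; lia).
  destruct (prime_dec (Z.of_nat (K + d))); [rewrite H by (auto; lia)|]; ring.
Qed.

Lemma prod_primes_below_cprod f N : prod_primes_below f N =
  cprod (fun m => 1 + (if prime_dec (Z.of_nat m) then f m - 1 else RtoC 0))%C 0 N.
Proof. induction N; simpl; [auto|]. rewrite IHN. destruct (prime_dec (Z.of_nat N)); f_equal; ring. Qed.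

Lemma prod_primes_below_cauchy f c : 0 <= c ->
  (forall m, prime (Z.of_nat m) -> Cmod (f m - 1)%C <= c / INR m ^ 2) ->
  Ccauchy (prod_primes_below f).
Proof.
  intros Hc Hf.
  set (a := fun m => if prime_dec (Z.of_nat m) then (f m - 1)%C else RtoC 0).
  assert (Ha : small_tails (fun m => Cmod (a m))).
  { apply small_tails_le with (h := fun m => c * / INR m ^ 2);
      [|apply small_tails_scal, small_tails_inv_sq; exact Hc].
    intros m Hm. unfold a. destruct (prime_dec (Z.of_nat m)); [apply Hf; auto|].
    rewrite Cmod_0. apply Rmult_le_pos; [exact Hc|].
    apply Rlt_le, Rinv_0_lt_compat, pow_lt, (lt_INR 0); lia. }
  intros eps He. destruct (cprod_cauchy a Ha eps He) as [N HN].
  exists N. intros m n Hm Hn. rewrite !prod_primes_below_cprod. apply HN; auto.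
Qed.

Lemma Cmod_character_le_1 q chi : dirichlet_character q chi -> forall n, Cmod (chi n) <= 1.
Proof.
  intros [Hq [H1 [Hmul [Hper _]]]] n.
  assert (Hperk : forall r k, chi (r + k * q)%nat = chi r).
  { intros r k. induction k; [rewrite Nat.add_0_r; auto|].
    replace (r + S k * q)%nat with (r + k * q + q)%nat by lia. rewrite Hper. auto. }
  set (M := rsum (fun r => Cmod (chi r)) 0 q).
  assert (HM : forall m, Cmod (chi m) <= M).
  { intros m. rewrite (Nat.div_mod_eq m q), Nat.add_comm, Nat.mul_comm, Hperk.
    apply (rsum_term_le (fun r => Cmod (chi r)) 0 q (m mod q)); [intros; apply Cmod_ge_0|].
    apply Nat.mod_upper_bound. lia. }
  assert (Hpow : forall k, Cmod (chi (n ^ k)%nat) = Cmod (chi n) ^ k).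
  { induction k; simpl; [rewrite H1, Cmod_1; auto|]. rewrite Hmul, Cmod_mult, IHk. auto. }
  (* a value of modulus > 1 would make |chi (n^k)| = |chi n|^k unbounded *)
  apply Rnot_lt_le. intros Hlt.
  destruct (Pow_x_infinity (Cmod (chi n)) ltac:(rewrite Rabs_pos_eq; [lra|apply Cmod_ge_0]) (M + 1))
    as [N HN].
  specialize (HN N (le_n _)). rewrite <- Hpow, Rabs_pos_eq in HN by apply Cmod_ge_0.
  specialize (HM (n ^ N)%nat). lra.
Qed.

Definition dterm (chi : nat -> C) (s n : nat) : C := (chi n / RtoC (INR n ^ s))%C.

Fixpoint rough (N m : nat) : bool :=
  match N with
  | O => true
  | S j => if prime_dec (Z.of_nat j)
           then (if Zdivide_dec (Z.of_nat j) (Z.of_nat m) then false else rough j m)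
           else rough j m
  end.

Definition sieved_term (chi : nat -> C) (s N n : nat) : C :=
  if rough N n then dterm chi s n else RtoC 0.

Definition sieved_L (chi : nat -> C) (s N : nat) : C := Clim (sum_1_to (sieved_term chi s N)).

Lemma rough_mul_prime p k N : prime (Z.of_nat p) -> (N <= p)%nat -> rough N (p * k) = rough N k.
Proof.
  intros Hp. induction N; intros HN; simpl; [auto|].
  destruct (prime_dec (Z.of_nat N)) as [HNp|]; [|apply IHN; lia].
  assert (Hdiv : (Z.of_nat N | Z.of_nat (p * k)) <-> (Z.of_nat N | Z.of_nat k)).
  { rewrite Nat2Z.inj_mul. split; intros H; [|apply Z.divide_mul_r; auto].
    destruct (prime_mult _ HNp _ _ H) as [H2|H2]; auto. exfalso.
    pose proof (prime_ge_2 _ HNp).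
    destruct (prime_divisors _ Hp _ H2) as [E|[E|[E|E]]]; lia. }
  destruct (Zdivide_dec (Z.of_nat N) (Z.of_nat (p * k)));
    destruct (Zdivide_dec (Z.of_nat N) (Z.of_nat k)); try tauto.
  apply IHN. lia.
Qed.

Lemma rough_false d N m : prime (Z.of_nat d) -> (d < N)%nat -> (Z.of_nat d | Z.of_nat m) ->
  rough N m = false.
Proof.
  intros Hd. induction N; intros HN Hdm; [lia|]. simpl.
  destruct (Nat.eq_dec d N) as [E|E].
  - subst. destruct (prime_dec (Z.of_nat N)); [|contradiction].
    destruct (Zdivide_dec (Z.of_nat N) (Z.of_nat m)); [auto|contradiction].
  - destruct (prime_dec (Z.of_nat N));
      [destruct (Zdivide_dec (Z.of_nat N) (Z.of_nat m)); [auto|]|]; apply IHN; auto; lia.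
Qed.

Lemma rough_1 N : rough N 1 = true.
Proof.
  induction N; simpl; [auto|]. destruct (prime_dec (Z.of_nat N)) as [Hp|]; [|auto].
  destruct (Zdivide_dec (Z.of_nat N) 1) as [D|]; [|auto].
  apply Z.divide_1_r in D. pose proof (prime_ge_2 _ Hp). lia.
Qed.

Lemma prime_divisor_exists m : (2 <= m)%nat ->
  exists d, prime (Z.of_nat d) /\ (d <= m)%nat /\ (Z.of_nat d | Z.of_nat m).
Proof.
  induction m as [m IH] using lt_wf_ind. intros Hm.
  destruct (prime_dec (Z.of_nat m)) as [Hp|Hp].
  - exists m. split; [auto | split; [lia | apply Z.divide_refl]].
  - destruct (not_prime_divide (Z.of_nat m) ltac:(lia) Hp) as [k [Hk Hkd]].
    destruct (IH (Z.to_nat k) ltac:(lia) ltac:(lia)) as [d [Hd1 [Hd2 Hd3]]].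
    exists d. split; [auto | split; [lia |]]. rewrite Z2Nat.id in Hd3 by lia.
    eapply Z.divide_trans; eauto.
Qed.

Lemma sum_1_to_mul_index p h Y : (1 <= p)%nat ->
  (forall n, ~ (Z.of_nat p | Z.of_nat n) -> h n = RtoC 0) ->
  sum_1_to h (p * Y) = sum_1_to (fun k => h (p * k)%nat) Y.
Proof.
  intros Hp Hh. induction Y; [rewrite Nat.mul_0_r; auto|].
  replace (p * S Y)%nat with (p * Y + S (p - 1))%nat by lia.
  rewrite sum_1_to_add. simpl csum. rewrite csum_zero. simpl. rewrite IHY.
  - replace (S (p * Y + (p - 1))) with (p * S Y)%nat by lia. ring.
  - intros j Hj. apply Hh. intros Hd.
    assert (Hd2 : (Z.of_nat p | Z.of_nat (j + 1))).
    { replace (Z.of_nat (j + 1)) with (Z.of_nat (S (p * Y) + j) - Z.of_nat p * Z.of_nat Y)%Z by lia.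
      apply Z.divide_sub_r; [auto|]. apply Z.divide_mul_l, Z.divide_refl. }
    apply Z.divide_pos_le in Hd2; lia.
Qed.

Section EulerProduct.

Variables (q : nat) (chi : nat -> C) (s : nat).
Hypothesis Hchi : dirichlet_character q chi.
Hypothesis Hs : (2 <= s)%nat.

Lemma dterm_mul p k : (1 <= p)%nat -> (1 <= k)%nat ->
  dterm chi s (p * k) = (dterm chi s p * dterm chi s k)%C.
Proof.
  destruct Hchi as [_ [_ [Hmul _]]]. intros Hp Hk.
  unfold dterm. rewrite Hmul, mult_INR, Rpow_mult_distr, RtoC_mult.
  assert (INR p ^ s <> 0) by (apply pow_nonzero, not_0_INR; lia).
  assert (INR k ^ s <> 0) by (apply pow_nonzero, not_0_INR; lia).
  field. split; intros E; injection E; auto.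
Qed.

Lemma Cmod_dterm_le n : (1 <= n)%nat -> Cmod (dterm chi s n) <= / INR n ^ 2.
Proof.
  intros Hn. assert (1 <= INR n) by (apply (le_INR 1); lia).
  assert (0 < INR n ^ s) by (apply pow_lt; lra).
  unfold dterm. rewrite Cmod_div, Cmod_R, Rabs_pos_eq by (lra || (intros E; injection E; lra)).
  pose proof (Cmod_character_le_1 q chi Hchi n). pose proof (Cmod_ge_0 (chi n)).
  assert (INR n ^ 2 <= INR n ^ s) by (apply Rle_pow; auto).
  unfold Rdiv. rewrite <- (Rmult_1_l (/ INR n ^ 2)).
  apply Rmult_le_compat; [lra | apply Rlt_le, Rinv_0_lt_compat; lra | lra |].
  apply Rinv_le_contravar; [apply pow_lt|]; lra.
Qed.

Lemma Cmod_dterm_prime_lt_1 p : prime (Z.of_nat p) -> Cmod (dterm chi s p) < 1.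
Proof.
  intros Hp. pose proof (prime_ge_2 _ Hp).
  assert (2 <= INR p) by (apply (le_INR 2); lia).
  eapply Rle_lt_trans; [apply Cmod_dterm_le; lia|].
  rewrite <- Rinv_1. apply Rinv_lt_contravar; nra.
Qed.

Lemma one_sub_dterm_prime_neq_0 p : prime (Z.of_nat p) -> (1 - dterm chi s p)%C <> RtoC 0.
Proof.
  intros Hp E. pose proof (Cmod_dterm_prime_lt_1 p Hp).
  replace (dterm chi s p) with (1 - (1 - dterm chi s p))%C in H by ring.
  rewrite E in H. replace (1 - 0)%C with (RtoC 1) in H by ring. rewrite Cmod_1 in H. lra.
Qed.

Lemma sieved_term_small_tails N : small_tails (fun n => Cmod (sieved_term chi s N n)).
Proof.
  apply small_tails_le with (h := fun n => / INR n ^ 2); [|exact small_tails_inv_sq].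
  intros n Hn. unfold sieved_term. destruct (rough N n); [apply Cmod_dterm_le; auto|].
  rewrite Cmod_0. apply Rlt_le, Rinv_0_lt_compat, pow_lt, (lt_INR 0). lia.
Qed.

Lemma sieved_L_cvg N : Ccvg (sum_1_to (sieved_term chi s N)) (sieved_L chi s N).
Proof. apply Ccauchy_cvg_Clim, sum_1_to_cauchy, sieved_term_small_tails. Qed.

(* Sieving out the prime [p] removes the multiples [p * k] of [p], which
   contribute [dterm p] times the previous sum. *)
Lemma sieve_step p Y : prime (Z.of_nat p) ->
  sum_1_to (sieved_term chi s (S p)) (p * Y) =
  (sum_1_to (sieved_term chi s p) (p * Y) - dterm chi s p * sum_1_to (sieved_term chi s p) Y)%C.
Proof.
  intros Hp. pose proof (prime_ge_2 _ Hp).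
  set (D := fun n => if Zdivide_dec (Z.of_nat p) (Z.of_nat n) then sieved_term chi s p n else RtoC 0).
  assert (E : forall n, sieved_term chi s (S p) n = (sieved_term chi s p n - D n)%C).
  { intros n. unfold sieved_term, D. simpl rough at 1.
    destruct (prime_dec (Z.of_nat p)); [|contradiction].
    destruct (Zdivide_dec (Z.of_nat p) (Z.of_nat n)); unfold sieved_term; destruct (rough p n); ring. }
  rewrite (sum_1_to_ext _ (fun n => sieved_term chi s p n - D n)%C), sum_1_to_minus by auto.
  f_equal. rewrite sum_1_to_mul_index by (unfold D; try lia; intros n Hn;
    destruct (Zdivide_dec (Z.of_nat p) (Z.of_nat n)); tauto).
  rewrite <- sum_1_to_scal. apply sum_1_to_ext. intros k Hk.
  unfold D. destruct (Zdivide_dec (Z.of_nat p) (Z.of_nat (p * k))) as [_|F].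
  - unfold sieved_term. rewrite rough_mul_prime by (auto; lia).
    destruct (rough p k); [apply dterm_mul; lia | ring].
  - exfalso. apply F. rewrite Nat2Z.inj_mul. apply Z.divide_mul_l, Z.divide_refl.
Qed.

Lemma sieved_L_succ N : sieved_L chi s (S N) =
  (sieved_L chi s N * (if prime_dec (Z.of_nat N) then 1 - dterm chi s N else 1))%C.
Proof.
  destruct (prime_dec (Z.of_nat N)) as [Hp|Hp].
  - pose proof (prime_ge_2 _ Hp).
    apply (Ccvg_unique (fun Y => sum_1_to (sieved_term chi s (S N)) (N * Y))).
    + apply Ccvg_mul_index, sieved_L_cvg. lia.
    + eapply Ccvg_eventually_ext with (N0 := 0%nat); [intros Y _; symmetry; apply sieve_step, Hp|].
      replace (sieved_L chi s N * (1 - dterm chi s N))%C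
        with (sieved_L chi s N - dterm chi s N * sieved_L chi s N)%C by ring.
      apply Ccvg_minus; [apply Ccvg_mul_index; [lia | apply sieved_L_cvg]|].
      apply Ccvg_mult; [apply Ccvg_const | apply sieved_L_cvg].
  - rewrite Cmult_1_r. unfold sieved_L at 1. apply Ccvg_Clim.
    apply Ccvg_eventually_ext with (u := sum_1_to (sieved_term chi s N)) (N0 := 0%nat);
      [|apply sieved_L_cvg].
    intros X _. apply sum_1_to_ext. intros n _. unfold sieved_term. simpl rough at 2.
    destruct (prime_dec (Z.of_nat N)); [contradiction | auto].
Qed.

Lemma sieved_L_eq N :
  sieved_L chi s N = (Lfun s chi * prod_primes_below (fun p => 1 - dterm chi s p)%C N)%C.
Proof.
  induction N; [simpl; rewrite Cmult_1_r; reflexivity|].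
  rewrite sieved_L_succ, IHN. simpl. ring.
Qed.

(* Below [N], only [1] is [N]-rough. *)
Lemma sum_sieved_term_head N j : (1 <= j)%nat -> (j < N)%nat ->
  sum_1_to (sieved_term chi s N) j = RtoC 1.
Proof.
  destruct Hchi as [_ [H1 _]]. intros Hj HjN. induction j as [|j IH]; [lia|].
  destruct j.
  - simpl. unfold sieved_term, dterm. rewrite rough_1, H1.
    replace (INR 1 ^ s) with 1 by (rewrite pow1; reflexivity). field.
  - simpl sum_1_to in *. rewrite IH by lia.
    destruct (prime_divisor_exists (S (S j)) ltac:(lia)) as [d [Hd1 [Hd2 Hd3]]].
    unfold sieved_term. rewrite (rough_false d) by (auto; lia). ring.
Qed.

Lemma sieved_L_tendsto_1 : Ccvg (sieved_L chi s) (RtoC 1).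
Proof.
  intros eps He. destruct (small_tails_inv_sq (eps / 2)) as [N0 HN0]; [lra|].
  exists (N0 + 2)%nat. intros N HN.
  apply Rle_lt_trans with (eps / 2); [|lra].
  assert (Hcvg : Ccvg (fun X => sum_1_to (sieved_term chi s N) X - 1)%C (sieved_L chi s N - 1)%C)
    by (apply Ccvg_minus; [apply sieved_L_cvg | apply Ccvg_const]).
  apply (Ccvg_Cmod_bounds _ _ 0 _ N Hcvg). intros X HX. split; [apply Cmod_ge_0|].
  replace X with ((N - 1) + (X - (N - 1)))%nat by lia.
  rewrite sum_1_to_add, sum_sieved_term_head by lia. replace (S (N - 1)) with N by lia.
  replace (1 + csum (sieved_term chi s N) N (X - (N - 1)) - 1)%C
    with (csum (sieved_term chi s N) N (X - (N - 1))) by ring.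
  eapply Rle_trans; [apply Cmod_csum_le|].
  eapply Rle_trans; [apply rsum_le with (h := fun n => / INR n ^ 2)|apply HN0; lia].
  intros n Hn. unfold sieved_term. destruct (rough N n); [apply Cmod_dterm_le; lia|].
  rewrite Cmod_0. apply Rlt_le, Rinv_0_lt_compat, pow_lt, (lt_INR 0). lia.
Qed.

(* With [Q_N = prod_(p<N) (1 - chi(p) p^-s)] we have [L(s) Q_N -> 1], so the
   inverse products [1/Q_N = L(s) / (L(s) Q_N)] tend to [L(s)]. *)
Theorem euler_product :
  Ccvg (prod_primes_below (fun p => / (1 - dterm chi s p))%C) (Lfun s chi).
Proof.
  set (Q := prod_primes_below (fun p => 1 - dterm chi s p)%C).
  set (E := prod_primes_below (fun p => / (1 - dterm chi s p))%C).
  assert (HEQ : forall N, (E N * Q N)%C = RtoC 1).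
  { intros N. unfold E, Q. rewrite <- prod_primes_below_mult. apply prod_primes_below_one.
    intros p Hp. apply Cinv_l, one_sub_dterm_prime_neq_0, Hp. }
  destruct (sieved_L_tendsto_1 (1 / 2)) as [N0 HN0]; [lra|].
  apply Ccvg_eventually_ext with (N0 := N0) (u := fun N => (Lfun s chi * / sieved_L chi s N)%C).
  - intros N HN. specialize (HN0 N HN).
    assert (Hne : sieved_L chi s N <> RtoC 0).
    { intros Z. rewrite Z in HN0. replace (0 - 1)%C with (- (1))%C in HN0 by ring.
      rewrite Cmod_opp, Cmod_1 in HN0. lra. }
    rewrite sieved_L_eq in Hne |- *. fold Q in Hne |- *.
    replace (E N) with (E N * (Lfun s chi * Q N * / (Lfun s chi * Q N)))%C
      by (rewrite (Cinv_r _ Hne); ring).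
    replace (E N * (Lfun s chi * Q N * / (Lfun s chi * Q N)))%C
      with ((E N * Q N) * Lfun s chi * / (Lfun s chi * Q N))%C by ring.
    rewrite HEQ. ring.
  - assert (H : Ccvg (fun N => Lfun s chi * / sieved_L chi s N)%C (Lfun s chi * / 1)%C).
    { apply Ccvg_mult; [apply Ccvg_const|]. apply Ccvg_inv; [apply sieved_L_tendsto_1|].
      intros E1. injection E1. lra. }
    replace (Lfun s chi * / 1)%C with (Lfun s chi) in H by field. exact H.
Qed.

End EulerProduct.

Definition B_factor (chi : nat -> C) (p : nat) : C :=
  (1 + (chi p - 1) * RtoC (INR p) / ((RtoC (INR p ^ 2) - chi p) * RtoC (INR p - 1)))%C.

Definition artin_factor (p : nat) : C := RtoC (1 - / (INR p * (INR p - 1))).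

Lemma RtoC_neq_0 (x : R) : x <> 0 -> RtoC x <> RtoC 0.
Proof. intros H E. apply H. injection E. auto. Qed.

Lemma Cpow_sub_neq_0 (P : R) (x : C) k : 2 <= P -> Cmod x <= 1 -> (1 <= k)%nat ->
  (Cpow (RtoC P) k - x)%C <> RtoC 0.
Proof.
  intros HP Hx Hk E. pose proof (Cmod_le_add_sub (Cpow (RtoC P) k) x) as H.
  rewrite E, Cmod_0, <- RtoC_pow, Cmod_R, Rabs_pos_eq in H by (apply pow_le; lra).
  assert (P ^ 1 <= P ^ k) by (apply Rle_pow; lra || lia). simpl in *. lra.
Qed.

Section LocalFactor.

Variables (chi : nat -> C) (p : nat).
Hypothesis Hchi_p : Cmod (chi p) <= 1.

Lemma B_factor_eq : (2 <= p)%nat ->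
  B_factor chi p = (artin_factor p * / (1 - dterm chi 2 p) * / (1 - dterm chi 3 p)
                    * / (1 - dterm chi 4 p) * local_factor chi p)%C.
Proof.
  intros Hp. assert (HP : 2 <= INR p) by (apply (le_INR 2); lia).
  unfold B_factor, artin_factor, dterm, local_factor.
  assert (E1 : INR p * (INR p - 1) <> 0) by nra.
  rewrite (RtoC_minus 1 (/ _)), (RtoC_inv _ E1), !RtoC_mult, !RtoC_minus, !RtoC_pow.
  set (z := RtoC (INR p)). set (x := chi p).
  assert (Hz : z <> RtoC 0) by (apply RtoC_neq_0; lra).
  assert (Hz1 : (z - 1)%C <> RtoC 0) by (unfold z; rewrite <- RtoC_minus; apply RtoC_neq_0; lra).
  assert (Hz2 : (Cpow z 2 - z - 1)%C <> RtoC 0).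
  { unfold z. rewrite <- RtoC_pow, <- !RtoC_minus. apply RtoC_neq_0. nra. }
  pose proof (Cpow_sub_neq_0 (INR p) x 2 HP Hchi_p ltac:(lia)).
  pose proof (Cpow_sub_neq_0 (INR p) x 3 HP Hchi_p ltac:(lia)).
  pose proof (Cpow_sub_neq_0 (INR p) x 4 HP Hchi_p ltac:(lia)).
  fold z in H, H0, H1.
  field. repeat split; assumption.
Qed.

(* The factor [(1 + x/(p(p^2-p-1)))(1 - x/p^3)(1 - x/p^4)] is [1 + O(p^-5)]:
   the coefficient of [x] cancels down to [(2p+1)/(p^4 (p^2-p-1))]. *)
Lemma local_factor_expand : (2 <= p)%nat ->
  let P := INR p in let D := P ^ 2 - P - 1 in
  (local_factor chi p - 1)%C =
    (chi p * RtoC ((2 * P + 1) / (P ^ 4 * D))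
     + chi p * chi p * RtoC (/ P ^ 7 - / (P ^ 4 * D) - / (P ^ 5 * D))
     + chi p * chi p * chi p * RtoC (/ (P ^ 8 * D)))%C.
Proof.
  intros Hp P D. assert (HP : 2 <= P) by (apply (le_INR 2); lia).
  assert (HD : 0 < D) by (unfold D; nra).
  assert (N1 : P ^ 4 * D <> 0) by (apply Rmult_integral_contrapositive_currified; [apply pow_nonzero|]; lra).
  assert (N2 : P ^ 5 * D <> 0) by (apply Rmult_integral_contrapositive_currified; [apply pow_nonzero|]; lra).
  assert (N3 : P ^ 8 * D <> 0) by (apply Rmult_integral_contrapositive_currified; [apply pow_nonzero|]; lra).
  assert (N4 : P ^ 7 <> 0) by (apply pow_nonzero; lra).
  unfold local_factor, D. fold P.
  repeat (rewrite RtoC_minus || rewrite RtoC_plus || rewrite RtoC_mult || rewrite RtoC_pow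
          || (rewrite RtoC_div by assumption) || (rewrite RtoC_inv by assumption)).
  set (z := RtoC P). set (x := chi p).
  assert (Hz : z <> RtoC 0) by (apply RtoC_neq_0; lra).
  assert (Hz2 : (Cpow z 2 - z - 1)%C <> RtoC 0).
  { unfold z. rewrite <- RtoC_pow, <- !RtoC_minus. apply RtoC_neq_0. fold D. lra. }
  field. repeat split; assumption.
Qed.

End LocalFactor.

Lemma Cmod_cubic_le (x a b c : C) : Cmod x <= 1 ->
  Cmod (x * a + x * x * b + x * x * x * c)%C <= Cmod a + Cmod b + Cmod c.
Proof.
  intros Hx. pose proof (Cmod_ge_0 x).
  assert (Hmul : forall r : C, Cmod (x * r)%C <= Cmod r).
  { intros r. rewrite Cmod_mult. pose proof (Cmod_ge_0 r). nra. }
  rewrite <- !Cmult_assoc.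
  eapply Rle_trans; [apply Cmod_triangle|].
  eapply Rle_trans; [apply Rplus_le_compat_r, Cmod_triangle|].
  pose proof (Hmul a). pose proof (Rle_trans _ _ _ (Hmul _) (Hmul b)).
  pose proof (Rle_trans _ _ _ (Hmul _) (Rle_trans _ _ _ (Hmul _) (Hmul c))). lra.
Qed.

Lemma Rdiv_le_cross k a c b : 0 < a -> 0 < b -> k * b <= c * a -> k / a <= c / b.
Proof.
  intros Ha Hb H. apply Rmult_le_reg_r with (a * b); [nra|].
  replace (k / a * (a * b)) with (k * b) by (field; lra).
  replace (c / b * (a * b)) with (c * a) by (field; lra). exact H.
Qed.

Lemma local_factor_coeffs_le (P : R) : 33 <= P -> let D := P ^ 2 - P - 1 in
  Rabs ((2 * P + 1) / (P ^ 4 * D)) + Rabs (/ P ^ 7 - / (P ^ 4 * D) - / (P ^ 5 * D))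
  + Rabs (/ (P ^ 8 * D)) <= (5 / 2) / P ^ 5.
Proof.
  intros HP D. assert (HD : 1000 <= D) by (unfold D; nra).
  assert (HP4 : 0 < P ^ 4) by (apply pow_lt; lra).
  assert (HP5 : 0 < P ^ 5) by (apply pow_lt; lra).
  assert (HP7 : 0 < P ^ 7) by (apply pow_lt; lra).
  assert (a1 : (2 * P + 1) / (P ^ 4 * D) <= (22 / 10) / P ^ 5)
    by (apply Rdiv_le_cross; [nra | lra | unfold D; simpl; nra]).
  assert (b1 : / (P ^ 4 * D) <= (1 / 10) / P ^ 5)
    by (rewrite <- (Rdiv_1_l (P ^ 4 * D)); apply Rdiv_le_cross; [nra | lra | unfold D; simpl; nra]).
  assert (b2 : / (P ^ 5 * D) <= (1 / 10) / P ^ 5)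
    by (rewrite <- (Rdiv_1_l (P ^ 5 * D)); apply Rdiv_le_cross; [nra | lra | nra]).
  assert (b3 : / P ^ 7 <= (1 / 20) / P ^ 5).
  { rewrite <- (Rdiv_1_l (P ^ 7)). apply Rdiv_le_cross; [lra | lra |].
    replace (P ^ 7) with (P ^ 5 * P ^ 2) by ring. assert (20 <= P ^ 2) by nra. nra. }
  assert (c1 : / (P ^ 8 * D) <= (1 / 20) / P ^ 5).
  { rewrite <- (Rdiv_1_l (P ^ 8 * D)). apply Rdiv_le_cross; [apply Rmult_lt_0_compat; [apply pow_lt|]; lra | lra |].
    replace (P ^ 8 * D) with (P ^ 5 * (P ^ 3 * D)) by ring.
    assert (1 <= P ^ 3) by (apply pow_R1_Rle; lra).
    assert (20 <= P ^ 3 * D) by nra. nra. }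
  assert (0 < / (P ^ 4 * D)) by (apply Rinv_0_lt_compat; nra).
  assert (0 < / (P ^ 5 * D)) by (apply Rinv_0_lt_compat; nra).
  assert (0 < / P ^ 7) by (apply Rinv_0_lt_compat; nra).
  assert (0 < / (P ^ 8 * D)) by (apply Rinv_0_lt_compat, Rmult_lt_0_compat; [apply pow_lt|]; lra).
  rewrite (Rabs_pos_eq ((2 * P + 1) / _)) by (apply Rlt_le, Rdiv_lt_0_compat; nra).
  rewrite (Rabs_pos_eq (/ (P ^ 8 * D))) by lra.
  assert (Rabs (/ P ^ 7 - / (P ^ 4 * D) - / (P ^ 5 * D)) <= / P ^ 7 + / (P ^ 4 * D) + / (P ^ 5 * D))
    by (apply Rabs_le; lra).
  replace ((5 / 2) / P ^ 5) with
    ((22 / 10) / P ^ 5 + (1 / 10) / P ^ 5 + (1 / 10) / P ^ 5 + (1 / 20) / P ^ 5 + (1 / 20) / P ^ 5)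
    by (field; lra).
  lra.
Qed.

Lemma Cmod_local_factor_sub1_le chi p : Cmod (chi p) <= 1 -> 33 <= INR p ->
  Cmod (local_factor chi p - 1)%C <= (5 / 2) / INR p ^ 5.
Proof.
  intros Hx HP. assert (Hp : (2 <= p)%nat) by (apply INR_le; simpl; lra).
  rewrite (local_factor_expand chi p Hp).
  eapply Rle_trans; [apply Cmod_cubic_le, Hx|]. rewrite !Cmod_R.
  apply local_factor_coeffs_le, HP.
Qed.

Section ConsecutivePrimes.

Variable pr : nat -> nat.
Hypothesis Hpr : consecutive_primes pr.

Lemma consecutive_primes_lt a b : (1 <= a)%nat -> (a < b)%nat -> (pr a < pr b)%nat.
Proof.
  destruct Hpr as [_ [_ [Hinc _]]]. intros Ha Hab. induction Hab; [apply Hinc; auto|].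
  pose proof (Hinc m ltac:(lia)). lia.
Qed.

Lemma consecutive_primes_ge k : (1 <= k)%nat -> (k + 1 <= pr k)%nat.
Proof.
  intros Hk. induction Hk; [destruct Hpr as [H1 _]; lia|].
  pose proof (consecutive_primes_lt m (S m) ltac:(lia) ltac:(lia)). lia.
Qed.

Lemma consecutive_primes_gap n m : (1 <= n)%nat -> prime (Z.of_nat m) ->
  (pr n < m)%nat -> (pr (S n) <= m)%nat.
Proof.
  destruct Hpr as [_ [_ [_ Hall]]]. intros Hn Hm Hlt.
  destruct (Hall m Hm) as [k [Hk Ek]]. subst m.
  destruct (le_lt_dec k n) as [L|L].
  - destruct (Nat.eq_dec k n); [subst; lia|].
    pose proof (consecutive_primes_lt k n Hk ltac:(lia)). lia.
  - destruct (Nat.eq_dec k (S n)); [subst; lia|].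
    pose proof (consecutive_primes_lt (S n) k ltac:(lia) ltac:(lia)). lia.
Qed.

Lemma prod_1_to_consecutive_primes f n : (1 <= n)%nat ->
  prod_1_to (fun k => f (pr k)) n = prod_primes_below f (S (pr n)).
Proof.
  intros Hn. induction Hn.
  - destruct Hpr as [H1 _]. simpl. rewrite H1. simpl.
    destruct (prime_dec 0) as [P|_]; [exfalso; apply not_prime_0; auto|].
    destruct (prime_dec 1) as [P|_]; [exfalso; apply not_prime_1; auto|].
    destruct (prime_dec 2) as [_|P]; [ring | exfalso; apply P, prime_2].
  - simpl prod_1_to. rewrite IHHn. simpl prod_primes_below at 2.
    destruct (prime_dec (Z.of_nat (pr (S m)))) as [_|P];
      [|exfalso; apply P; destruct Hpr as [_ [H2 _]]; apply H2; lia].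
    pose proof (consecutive_primes_lt m (S m) Hn ltac:(lia)).
    replace (pr (S m)) with (S (pr m) + (pr (S m) - S (pr m)))%nat at 2 by lia.
    rewrite prod_primes_below_skip; [auto|].
    intros k Hk Hp. pose proof (consecutive_primes_gap m k Hn Hp ltac:(lia)). lia.
Qed.

End ConsecutivePrimes.

Definition tail_bound (P : R) : R := 5 / (4 * P ^ 2 * (P - 2) * (P - 1)).

Lemma rsum_pow5_le_tail_bound (P : nat) k : (3 <= P)%nat ->
  rsum (fun m => (5 / 2) / INR m ^ 5) P k <= tail_bound (INR P).
Proof.
  intros HP. assert (HP3 : 3 <= INR P) by (apply (le_INR 3) in HP; simpl in HP; lra).
  set (f := fun m => (5 / 2) / INR P ^ 2 * / (2 * (INR m - 2) * (INR m - 1))).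
  replace (tail_bound (INR P)) with (f P) by (unfold f, tail_bound; field; repeat split; lra).
  apply rsum_telescope.
  - intros m Hm. unfold f. rewrite S_INR.
    assert (HPm : INR P <= INR m) by (apply le_INR; exact Hm).
    set (x := INR m) in *. set (y := INR P) in *.
    (* [m^5 >= P^2 (m-2)(m-1)m] and [1/((m-2)(m-1)m)] telescopes *)
    replace (5 / 2 / y ^ 2 * / (2 * (x - 2) * (x - 1)) - 5 / 2 / y ^ 2 * / (2 * (x + 1 - 2) * (x + 1 - 1)))
      with ((5 / 2) / (y ^ 2 * ((x - 2) * (x - 1) * x))) by (field; repeat split; lra).
    apply Rdiv_le_cross; [apply pow_lt; lra | apply Rmult_lt_0_compat; [nra|]; apply Rmult_lt_0_compat; [nra|lra] |].
    assert (y ^ 2 <= x ^ 2) by nra. assert ((x - 2) * (x - 1) * x <= x ^ 3) by nra.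
    assert (0 <= (x - 2) * (x - 1) * x) by (apply Rmult_le_pos; [apply Rmult_le_pos|]; lra).
    replace (x ^ 5) with (x ^ 2 * x ^ 3) by ring. nra.
  - intros m Hm. unfold f. assert (INR P <= INR m) by (apply le_INR; exact Hm).
    apply Rmult_le_pos; [apply Rlt_le, Rdiv_lt_0_compat; [lra | apply pow_lt; lra]|].
    apply Rlt_le, Rinv_0_lt_compat. apply Rmult_lt_0_compat; [apply Rmult_lt_0_compat|]; lra.
Qed.

Lemma tail_bound_lt_half P : 33 <= P -> 0 < tail_bound P < 1 / 2.
Proof.
  intros HP. unfold tail_bound.
  assert (Hden : 0 < 4 * P ^ 2 * (P - 2) * (P - 1)) by
    (apply Rmult_lt_0_compat; [apply Rmult_lt_0_compat; [apply Rmult_lt_0_compat|] |]; nra).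
  split; [apply Rdiv_lt_0_compat; lra|].
  apply Rmult_lt_reg_r with (4 * P ^ 2 * (P - 2) * (P - 1)); [exact Hden|].
  replace (5 / (4 * P ^ 2 * (P - 2) * (P - 1)) * (4 * P ^ 2 * (P - 2) * (P - 1))) with 5
    by (field; repeat split; nra).
  nra.
Qed.

(* [P^4 = P^3.85 * P^0.15] and [33^0.15 > 3/2]. *)
Lemma tail_bound_le_rpower P : 33 <= P -> tail_bound P <= 1 / (Rpower P (385 / 100) + 1).
Proof.
  intros HP.
  set (X := Rpower P (385 / 100)). set (Y := Rpower P (15 / 100)).
  assert (HX : 0 < X) by (unfold X, Rpower; apply exp_pos).
  assert (HY : 0 < Y) by (unfold Y, Rpower; apply exp_pos).
  assert (HXY : X * Y = P ^ 4).
  { unfold X, Y. rewrite <- Rpower_plus. replace (385 / 100 + 15 / 100) with (INR 4) by (simpl; lra).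
    apply Rpower_pow. lra. }
  assert (HY2 : 3 / 2 <= Y).
  { apply Rnot_lt_le. intros Hlt.
    assert (Y ^ 20 = P ^ 3).
    { rewrite <- (Rpower_pow 20 Y HY). unfold Y. rewrite Rpower_mult.
      replace (15 / 100 * INR 20) with (INR 3) by (simpl; lra). apply Rpower_pow. lra. }
    assert (Y ^ 20 <= (3 / 2) ^ 20) by (apply pow_incr; lra).
    assert (33 ^ 3 <= P ^ 3) by (apply pow_incr; lra).
    simpl in *. lra. }
  assert (X <= 2 / 3 * P ^ 4) by nra.
  unfold tail_bound. apply Rdiv_le_cross;
    [apply Rmult_lt_0_compat; [apply Rmult_lt_0_compat; [apply Rmult_lt_0_compat|] |]; nra | lra |].
  assert (P ^ 4 = P * P ^ 3) by ring. assert (33 ^ 3 <= P ^ 3) by (apply pow_incr; lra).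
  simpl in *. nra.
Qed.

Lemma Rpower_bounds_of_tail_bound P sig r : 33 <= P -> 0 <= sig ->
  sig <= 1 / (Rpower P (385 / 100) + 1) -> 1 - sig <= r <= 1 / (1 - sig) ->
  / (1 + Rpower P (- (385 / 100))) <= r /\ r <= 1 + / Rpower P (385 / 100).
Proof.
  intros HP Hs Hsig [H1 H2].
  rewrite Rpower_Ropp. set (X := Rpower P (385 / 100)) in *.
  assert (HX : 0 < X) by (unfold X, Rpower; apply exp_pos).
  assert (1 / (X + 1) < 1)
    by (apply Rmult_lt_reg_r with (X + 1); [lra | unfold Rdiv; rewrite Rmult_assoc, Rinv_l by lra; lra]).
  split.
  - replace (/ (1 + / X)) with (1 - 1 / (X + 1)) by (field; lra). lra.
  - eapply Rle_trans; [exact H2|]. replace (1 + / X) with (1 / (1 - 1 / (X + 1))) by (field; lra).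
    unfold Rdiv. rewrite !Rmult_1_l. apply Rinv_le_contravar; lra.
Qed.

Definition tail_factor (chi : nat -> C) (P0 m : nat) : C :=
  if (m <=? P0)%nat then RtoC 1 else local_factor chi m.

Definition head_factor (chi : nat -> C) (P0 m : nat) : C :=
  if (m <=? P0)%nat then local_factor chi m else RtoC 1.

Lemma artin_product_cvg : Ccvg (prod_primes_below artin_factor) artinA.
Proof.
  apply Ccauchy_cvg_Clim, prod_primes_below_cauchy with (c := 2); [lra|].
  intros m Hm. pose proof (prime_ge_2 _ Hm).
  assert (2 <= INR m) by (apply (le_INR 2); lia).
  unfold artin_factor. rewrite <- RtoC_minus, Cmod_R.
  replace (1 - / (INR m * (INR m - 1)) - 1) with (- (1 / (INR m * (INR m - 1)))) by (field; lra).
  rewrite Rabs_Ropp, Rabs_pos_eq by (apply Rlt_le, Rdiv_lt_0_compat; nra).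
  apply Rdiv_le_cross; nra.
Qed.

Section Tail.

Variables (q : nat) (chi : nat -> C) (P0 : nat).
Hypothesis Hchi : dirichlet_character q chi.

Lemma prod_head_factor N : (S P0 <= N)%nat ->
  prod_primes_below (head_factor chi P0) N = prod_primes_below (local_factor chi) (S P0).
Proof.
  intros HN. replace N with (S P0 + (N - S P0))%nat by lia.
  rewrite prod_primes_below_skip.
  - apply prod_primes_below_ext. intros m Hm _. unfold head_factor.
    replace (m <=? P0)%nat with true by (symmetry; apply Nat.leb_le; lia). reflexivity.
  - intros m Hm _. unfold head_factor.
    replace (m <=? P0)%nat with false by (symmetry; apply Nat.leb_gt; lia). reflexivity.
Qed.

Lemma prod_B_factor_eq N : (S P0 <= N)%nat ->
  prod_primes_below (B_factor chi) N =
  (prod_primes_below artin_factor N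
   * prod_primes_below (fun p => / (1 - dterm chi 2 p)) N
   * prod_primes_below (fun p => / (1 - dterm chi 3 p)) N
   * prod_primes_below (fun p => / (1 - dterm chi 4 p)) N
   * (prod_primes_below (local_factor chi) (S P0) * prod_primes_below (tail_factor chi P0) N))%C.
Proof.
  intros HN. rewrite <- (prod_head_factor N HN), <- !prod_primes_below_mult.
  apply prod_primes_below_ext. intros m _ Hm.
  rewrite (B_factor_eq chi m (Cmod_character_le_1 q chi Hchi m)) by (apply prime_ge_2 in Hm; lia).
  unfold head_factor, tail_factor. destruct (m <=? P0)%nat; ring.
Qed.

Lemma Bchi_eq_tail R1 : Ccvg (prod_primes_below (tail_factor chi P0)) R1 ->
  Bchi chi = (R1 * artinA * Lfun 2 chi * Lfun 3 chi * Lfun 4 chi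
              * prod_primes_below (local_factor chi) (S P0))%C.
Proof.
  intros HR1. unfold Bchi, prod_over_primes. fold (B_factor chi).
  apply Ccvg_Clim.
  replace (R1 * artinA * Lfun 2 chi * Lfun 3 chi * Lfun 4 chi
           * prod_primes_below (local_factor chi) (S P0))%C
    with (artinA * Lfun 2 chi * Lfun 3 chi * Lfun 4 chi
          * (prod_primes_below (local_factor chi) (S P0) * R1))%C by ring.
  eapply Ccvg_eventually_ext; [intros N HN; symmetry; apply (prod_B_factor_eq N HN)|].
  repeat apply Ccvg_mult;
    solve [apply artin_product_cvg | apply (euler_product q); auto | apply Ccvg_const | exact HR1].
Qed.

Variable P : nat.
Hypothesis HP : 33 <= INR P.
Hypothesis Hgap : forall m, prime (Z.of_nat m) -> (P0 < m)%nat -> (P <= m)%nat.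

Lemma Cmod_tail_factor_sub1_le m : prime (Z.of_nat m) ->
  Cmod (tail_factor chi P0 m - 1)%C <= if (m <=? P0)%nat then 0 else (5 / 2) / INR m ^ 5.
Proof.
  intros Hm. unfold tail_factor. destruct (m <=? P0)%nat eqn:Em.
  - replace (1 - 1)%C with (RtoC 0) by ring. rewrite Cmod_0. lra.
  - apply Nat.leb_gt, (Hgap m Hm), le_INR in Em.
    apply Cmod_local_factor_sub1_le; [apply (Cmod_character_le_1 q chi Hchi) | lra].
Qed.

Lemma tail_product_cvg :
  Ccvg (prod_primes_below (tail_factor chi P0)) (Clim (prod_primes_below (tail_factor chi P0))).
Proof.
  apply Ccauchy_cvg_Clim, prod_primes_below_cauchy with (c := 5 / 2); [lra|].
  intros m Hm. eapply Rle_trans; [apply Cmod_tail_factor_sub1_le, Hm|].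
  assert (Hpos : 0 < INR m) by (apply (lt_INR 0); apply prime_ge_2 in Hm; lia).
  destruct (m <=? P0)%nat eqn:Em.
  - apply Rlt_le, Rdiv_lt_0_compat; [lra | apply pow_lt, Hpos].
  - apply Nat.leb_gt, (Hgap m Hm), le_INR in Em.
    apply Rdiv_le_cross; [apply pow_lt, Hpos | apply pow_lt, Hpos|].
    replace (INR m ^ 5) with (INR m ^ 2 * INR m ^ 3) by ring.
    assert (1 <= INR m ^ 3) by (apply pow_R1_Rle; lra).
    assert (0 < INR m ^ 2) by (apply pow_lt, Hpos). nra.
Qed.

Lemma tail_product_bounds N :
  1 - tail_bound (INR P) <= Cmod (prod_primes_below (tail_factor chi P0) N)
                         <= 1 / (1 - tail_bound (INR P)).
Proof.
  set (a := fun m => if prime_dec (Z.of_nat m) then (tail_factor chi P0 m - 1)%C else RtoC 0).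
  set (Ssum := rsum (fun m => Cmod (a m)) 0 N).
  assert (HS0 : 0 <= Ssum) by (apply rsum_nonneg; intros; apply Cmod_ge_0).
  assert (Hpos : forall m, (P <= m)%nat -> 0 <= (5 / 2) / INR m ^ 5).
  { intros m Hm. apply le_INR in Hm. apply Rlt_le, Rdiv_lt_0_compat; [lra | apply pow_lt; lra]. }
  assert (Ha : forall m, Cmod (a m) <= if (m <? P)%nat then 0 else (5 / 2) / INR m ^ 5).
  { intros m. unfold a. destruct (m <? P)%nat eqn:E1; [apply Nat.ltb_lt in E1 | apply Nat.ltb_ge in E1];
      (destruct (prime_dec (Z.of_nat m)) as [Hm|]; [|rewrite Cmod_0; try apply Hpos; lia || lra]);
      (eapply Rle_trans; [apply Cmod_tail_factor_sub1_le, Hm|]);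
      destruct (m <=? P0)%nat eqn:E0; try lra; try (apply Hpos; lia).
    apply Nat.leb_gt, (Hgap m Hm) in E0. lia. }
  assert (HS : Ssum <= tail_bound (INR P)).
  { assert (HP3 : (3 <= P)%nat) by (apply INR_le; simpl; lra).
    unfold Ssum. eapply Rle_trans; [apply rsum_shift_le with (M := P); [intros; apply Cmod_ge_0 | lia |]|].
    - intros m Hm. apply Rle_antisym; [|apply Cmod_ge_0].
      specialize (Ha m). replace (m <? P)%nat with true in Ha by (symmetry; apply Nat.ltb_lt; lia). exact Ha.
    - eapply Rle_trans; [|apply (rsum_pow5_le_tail_bound P N HP3)]. apply rsum_le.
      intros m Hm. specialize (Ha m).
      replace (m <? P)%nat with false in Ha by (symmetry; apply Nat.ltb_ge; lia). exact Ha. }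
  pose proof (tail_bound_lt_half (INR P) HP) as Hsig.
  assert (E : prod_primes_below (tail_factor chi P0) N = cprod (fun m => 1 + a m)%C 0 N)
    by exact (prod_primes_below_cprod _ N).
  rewrite E.
  split; [eapply Rle_trans; [|apply cprod_Cmod_ge]; fold Ssum; lra|].
  pose proof (cprod_sub1_le a 0 N ltac:(fold Ssum; lra)) as H. fold Ssum in H.
  pose proof (Cmod_le_add_sub (cprod (fun m => 1 + a m)%C 0 N) 1) as T. rewrite Cmod_1 in T.
  assert (Ssum / (1 - Ssum) = 1 / (1 - Ssum) - 1) by (field; lra).
  assert (1 / (1 - Ssum) <= 1 / (1 - tail_bound (INR P)))
    by (unfold Rdiv; rewrite !Rmult_1_l; apply Rinv_le_contravar; lra).
  lra.
Qed.

End Tail.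

Theorem mainTheorem15 (pr : nat -> nat) (Hpr : consecutive_primes pr)
  (q : nat) (chi : nat -> C) (Hchi : dirichlet_character q chi)
  (n : nat) (Hn : (31 <= n)%nat) :
  exists R1 : C,
    Bchi chi =
      Cmult (Cmult (Cmult (Cmult (Cmult R1 artinA) (Lfun 2 chi)) (Lfun 3 chi))
              (Lfun 4 chi))
        (prod_1_to (fun k => local_factor chi (pr k)) n) /\
    / (1 + Rpower (INR (pr (S n))) (- (385 / 100))) <= Cmod R1 /\
    Cmod R1 <= 1 + / Rpower (INR (pr (S n))) (385 / 100).
Proof.
  assert (Hn1 : (1 <= n)%nat) by lia.
  set (P := pr (S n)).
  assert (HP : 33 <= INR P).
  { pose proof (consecutive_primes_ge pr Hpr (S n) ltac:(lia)) as H.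
    pose proof (le_INR 33 P ltac:(lia)) as H33. simpl in H33. lra. }
  assert (Hgap : forall m, prime (Z.of_nat m) -> (pr n < m)%nat -> (P <= m)%nat)
    by (intros m; apply (consecutive_primes_gap pr Hpr n m Hn1)).
  pose proof (tail_product_cvg q chi (pr n) Hchi P HP Hgap) as HT.
  exists (Clim (prod_primes_below (tail_factor chi (pr n)))). split.
  - rewrite (prod_1_to_consecutive_primes pr Hpr (local_factor chi) n Hn1).
    exact (Bchi_eq_tail q chi (pr n) Hchi _ HT).
  - pose proof (tail_bound_lt_half (INR P) HP).
    apply Rpower_bounds_of_tail_bound with (sig := tail_bound (INR P));
      [exact HP | lra | apply tail_bound_le_rpower, HP |].
    apply (Ccvg_Cmod_bounds _ _ _ _ 0 HT). intros N _.
    exact (tail_product_bounds q chi (pr n) Hchi P HP Hgap N).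
Qed.
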